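(* For all $n,k\in\mathbb Z$, the sum of the weights of all hybrid lattice paths from $(0,0)$ to $(k,n-k)$ equals $\binom{n}{k}_w$.
   Context: Let $(w(s,t))_{s,t\in\mathbb Z}$ be commuting invertible variables, $W(s,t)=\prod_{j=1}^t w(s,j)$, with the product convention $\prod_{j=l}^m A_j=A_l\cdots A_m$ if $m>l-1$, $=1$ if $m=l-1$, $=A_{l-1}^{-1}\cdots A_{m+1}^{-1}$ if $m<l-1$. The coefficients $\binom{n}{k}_w$ ($n,k\in\mathbb Z$) are the unique family with $\binom{n}{0}_w=\binom{n}{n}_w=1$ for all $n$ and $\binom{n+1}{k}_w=\binom{n}{k}_w+\binom{n}{k-1}_w W(k,n+1-k)$ whenever $(n+1,k)\ne(0,0)$. Hybrid lattice paths from $(0,0)$ to $(N,M)\in\mathbb Z^2$: (i) if $N,M\ge0$, sequences of unit north steps and east steps; (ii) if $N\ge 0>M$, sequences of moves each of which is either a single south step or an east–south combination (an east step immediately followed by a south step), the first move being a south step; (iii) if $N<0\le M$, sequences of moves each of which is either a single west step or a north–west combination (a north step immediately followed by a west step), the first move being a west step; (iv) if $N,M<0$, there are no paths. Weights: each single north or south step has weight $1$; an east step $(s-1,t)\to(s,t)$ has weight $W(s,t)$; a west step $(s,t)\to(s-1,t)$ has weight $W(s,t)^{-1}$; an east–south combination $(s-1,t)\to(s,t)\to(s,t-1)$ has weight $-W(s,t)$; a north–west combination $(s,t-1)\to(s,t)\to(s-1,t)$ has weight $-W(s,t)^{-1}$. The weight of a path is the product of the weights of its steps/moves (the empty path to $(0,0)$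 has weight $1$). *)

From HB Require Import structures.
From mathcomp Require Import all_boot all_order all_algebra.
Set Implicit Arguments. Unset Strict Implicit. Unset Printing Implicit Defensive.
Import Order.TTheory GRing.Theory Num.Theory.
Local Open Scope ring_scope.

Inductive move := mN | mE | mS | mES | mW | mNW.

Definition move_to_nat (m : move) : nat :=
  match m with mN => 0 | mE => 1 | mS => 2 | mES => 3 | mW => 4 | mNW => 5 end%N.
Definition nat_to_move (n : nat) : option move :=
  match n with 0 => Some mN | 1 => Some mE | 2 => Some mS | 3 => Some mES
  | 4 => Some mW | 5 => Some mNW | _ => None end%N.
Lemma move_natK : pcancel move_to_nat nat_to_move. Proof. by case. Qed.
HB.instance Definition _ := Countable.copy move (pcan_type move_natK).
Definition move_enum := [:: mN; mE; mS; mES; mW; mNW].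
Lemma move_enumP : Finite.axiom move_enum. Proof. by case. Qed.
HB.instance Definition _ := isFinite.Build move move_enumP.

Section Weights.
Variable R : comUnitRingType.
Variable w : int -> int -> R.

(* W(s,t) = prod_{j=1}^t w(s,j) with the product convention:
   t >= 1 : w(s,1)...w(s,t);  t = 0 : 1;  t < 0 : w(s,0)^-1 ... w(s,t+1)^-1 *)
Definition Wst (s t : int) : R :=
  if (0 <= t)%R then \prod_(1 <= j < `|t|%N.+1) w s (j%:Z)
  else \prod_(0 <= i < `|t|%N) (w s (- (i%:Z)))^-1.

Definition move_step (p : int * int) (m : move) : (int * int) * R :=
  let: (x, y) := p in
  match m with
  | mN => ((x, y + 1), 1)
  | mE => ((x + 1, y), Wst (x + 1) y)
  | mS => ((x, y - 1), 1)
  | mES => ((x + 1, y - 1), - Wst (x + 1) y)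
  | mW => ((x - 1, y), (Wst x y)^-1)
  | mNW => ((x - 1, y + 1), - (Wst x (y + 1))^-1)
  end.

Fixpoint walk (p : int * int) (s : seq move) : (int * int) * R :=
  match s with
  | [::] => (p, 1)
  | m :: s' => let: (q, a) := move_step p m in
               let: (r, b) := walk q s' in (r, a * b)
  end.

Definition path_end (s : seq move) : int * int := (walk (0, 0) s).1.
Definition path_weight (s : seq move) : R := (walk (0, 0) s).2.
End Weights.

Definition endpoint (s : seq move) : int * int :=
  path_end (fun _ _ => 0 : int) s.

Definition hybrid_path (N M : int) (s : seq move) : bool :=
  (endpoint s == (N, M)) &&
  if (0 <= N) && (0 <= M) then all (fun m => (m == mN) || (m == mE)) s
  else if (0 <= N) && (M < 0) then
    all (fun m => (m == mS) || (m == mES)) s && (head mN s == mS)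
  else if (N < 0) && (0 <= M) then
    all (fun m => (m == mW) || (m == mNW)) s && (head mN s == mW)
  else false.

(* Every move changes
   |x|+|y| by at least 1, so hybrid paths have length <= |N|+|M|; each path is
   counted exactly once as a tuple of its length. *)
Definition hybrid_sum (R : comUnitRingType) (w : int -> int -> R) (N M : int) : R :=
  \sum_(L < (`|N| + `|M|).+1)
     \sum_(t : L.-tuple move | hybrid_path N M t) path_weight w t.

(* Sorting the paths to (N, M) by their last move shows that the path sums
   P(N, M) satisfy, for (N, M) <> (0, 0),
     P(N, M) = P(N, M - 1) + P(N - 1, M) W(N, M).
   For N, M >= 0 this is the north/east decomposition of P(N, M).  For
   N >= 0 > M the decomposition of P(N, M - 1) (last move south, or east-south
   of weight -W(N, M)) is this identity solved for P(N, M - 1); for N < 0 <= M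
   the decomposition of P(N - 1, M) (last move west, or north-west) is it
   solved for P(N - 1, M), which needs W(N, M) to be a unit.  Predecessors
   falling outside a region have path sum 0.  Together with
   P(0, M) = P(N, 0) = 1 this is, after M = n - k, the recurrence and boundary
   data of the w-binomials, and these determine a family uniquely because the
   W(k, m) are units: the difference of two solutions vanishes column by
   column. *)

From HB Require Import structures.
From mathcomp Require Import all_boot all_order all_algebra zify ring.
Set Implicit Arguments. Unset Strict Implicit. Unset Printing Implicit Defensive.
Import Order.TTheory GRing.Theory Num.Theory.
Local Open Scope ring_scope.

Lemma int_shift_const T (f : int -> T) :
  (forall n, f (n + 1) = f n) -> forall m n, f m = f n.
Proof.
move=> fS; have fD n (j : nat) : f (n + j%:Z) = f n.
  by elim: j => [|j IH]; rewrite ?addr0 // -addn1 PoszD addrA fS.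
move=> m n; wlog le_nm : m n / n <= m.
  by move=> wlog; have [/wlog|/ltW/wlog] := lerP n m.
by rewrite -(subrKC n m) -[m - n]gez0_abs ?subr_ge0 // -abszE fD.
Qed.

Lemma int_two_sided_const (T : Type) (g : int -> T) a :
  g 0 = a -> g (-1) = a ->
  (forall k, 0 <= k -> g (k + 1) = g k) -> (forall k, k < 0 -> g (k - 1) = g k) ->
  forall k, g k = a.
Proof.
move=> g0 gm1 gS gP; case=> n; elim: n => [|n IH] //.
  by rewrite -addn1 PoszD gS.
by rewrite (_ : Negz n.+1 = Negz n - 1) ?gP // !NegzE; lia.
Qed.

Lemma walk_cons (R : comUnitRingType) (w : int -> int -> R) p m s :
  walk w p (m :: s) =
  ((walk w (move_step w p m).1 s).1,
   (move_step w p m).2 * (walk w (move_step w p m).1 s).2).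
Proof. by rewrite /=; case: move_step => q a; case: walk. Qed.

Lemma walk_fst_indep (R R' : comUnitRingType) (w : int -> int -> R)
    (w' : int -> int -> R') p s :
  (walk w p s).1 = (walk w' p s).1.
Proof.
elim: s p => [|m s IH] p //; rewrite !walk_cons /= IH.
by congr (walk _ _ _).1; case: m; case: p.
Qed.

Lemma walk_rcons (R : comUnitRingType) (w : int -> int -> R) p s m :
  walk w p (rcons s m) =
  ((move_step w (walk w p s).1 m).1,
   (walk w p s).2 * (move_step w (walk w p s).1 m).2).
Proof.
elim: s p => [|m' s IH] p; first by rewrite walk_cons /= mul1r mulr1.
by rewrite rcons_cons !walk_cons IH /= mulrA.
Qed.

Lemma endpoint_rcons s m :
  endpoint (rcons s m) = (move_step (fun _ _ => 0 : int) (endpoint s) m).1.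
Proof. by rewrite /endpoint /path_end walk_rcons. Qed.

Lemma path_weight_rcons (R : comUnitRingType) (w : int -> int -> R) s m :
  path_weight w (rcons s m) = path_weight w s * (move_step w (endpoint s) m).2.
Proof.
rewrite /path_weight /endpoint /path_end walk_rcons /=.
by rewrite (walk_fst_indep w (fun _ _ => 0 : int)).
Qed.

Definition move_source (m : move) (q : int * int) : int * int :=
  let: (x, y) := q in
  match m with
  | mN => (x, y - 1) | mE => (x - 1, y) | mS => (x, y + 1)
  | mES => (x - 1, y + 1) | mW => (x + 1, y) | mNW => (x + 1, y - 1)
  end.

Lemma endpoint_rcons_eq s m q :
  (endpoint (rcons s m) == q) = (endpoint s == move_source m q).
Proof.
rewrite endpoint_rcons; case: (endpoint s) q => x y [x' y'].
case: m; rewrite /= !xpair_eqE.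
all: by apply/andP/andP => -[/eqP ? /eqP ?]; split; apply/eqP; lia.
Qed.

Lemma big_move (R : nmodType) (F : move -> R) :
  \sum_(m : move) F m = F mN + F mE + F mS + F mES + F mW + F mNW.
Proof. by rewrite /index_enum !unlock /= addr0 !addrA. Qed.

Lemma big_tuple0 (R : nmodType) (P : pred (0.-tuple move))
    (F : 0.-tuple move -> R) :
  \sum_(t : 0.-tuple move | P t) F t = if P [tuple] then F [tuple] else 0.
Proof.
case: ifP => P0; last by apply: big_pred0 => t; rewrite [t]tuple0.
by rewrite (big_pred1 [tuple]) // => t; rewrite [t]tuple0 P0; apply/esym/eqP.
Qed.

Lemma big_tuple_rcons (R : nmodType) (L : nat) (P : pred (seq move))
    (F : seq move -> R) :
  \sum_(t : L.+1.-tuple move | P t) F t =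
  \sum_(m : move) \sum_(t : L.-tuple move | P (rcons t m)) F (rcons t m).
Proof.
rewrite pair_big_dep /=.
pose snoc (p : move * L.-tuple move) := [tuple of rcons p.2 p.1].
pose unsnoc (t : L.+1.-tuple move) :=
  (last (thead t) (behead t), [tuple of belast (thead t) (behead_tuple t)]).
rewrite (reindex snoc) //; exists unsnoc => [[m t] _ | t _]; rewrite /unsnoc /snoc.
  congr (_, _); first by case: t => -[|x s] Hs //=; rewrite last_rcons.
  by apply/val_inj; case: t => -[|x s] Hs //=; rewrite belast_rcons.
by apply/val_inj; case: t => -[|x s] Hs //=; rewrite -lastI.
Qed.

Definition NE_move (m : move) := (m == mN) || (m == mE).
Definition SES_move (m : move) := (m == mS) || (m == mES).
Definition WNW_move (m : move) := (m == mW) || (m == mNW).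

Section HybridPaths.
Variables (N M : int) (s : seq move).

Lemma hybrid_path_NE : 0 <= N -> 0 <= M ->
  hybrid_path N M s = (endpoint s == (N, M)) && all NE_move s.
Proof. by move=> hN hM; rewrite /hybrid_path hN hM. Qed.

Lemma hybrid_path_SES : 0 <= N -> M < 0 ->
  hybrid_path N M s = [&& endpoint s == (N, M), all SES_move s & head mN s == mS].
Proof. by move=> hN hM; rewrite /hybrid_path hN hM lt_geF. Qed.

Lemma hybrid_path_WNW : N < 0 -> 0 <= M ->
  hybrid_path N M s = [&& endpoint s == (N, M), all WNW_move s & head mN s == mW].
Proof. by move=> hN hM; rewrite /hybrid_path hN hM lt_geF. Qed.

Lemma hybrid_path_endpoint : hybrid_path N M s -> endpoint s = (N, M).
Proof. by case/andP=> /eqP. Qed.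

Lemma hybrid_path_neg : N < 0 -> M < 0 -> hybrid_path N M s = false.
Proof. by move=> hN hM; rewrite /hybrid_path hN hM !lt_geF ?andbF. Qed.

End HybridPaths.

Lemma endpoint_NE s : all NE_move s ->
  [/\ (endpoint s).1 + (endpoint s).2 = (size s)%:Z,
      0 <= (endpoint s).1 & 0 <= (endpoint s).2].
Proof.
elim/last_ind: s => [|s m IH] //.
rewrite all_rcons endpoint_rcons size_rcons => /andP[hm /IH].
by case: (endpoint s) => x y /=; case: m hm => //= _ [*]; split; lia.
Qed.

Lemma endpoint_SES s : all SES_move s ->
  (endpoint s).2 = - (size s)%:Z /\ 0 <= (endpoint s).1.
Proof.
elim/last_ind: s => [|s m IH] //.
rewrite all_rcons endpoint_rcons size_rcons => /andP[hm /IH].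
by case: (endpoint s) => x y /=; case: m hm => //= _ [*]; split; lia.
Qed.

Lemma endpoint_WNW s : all WNW_move s ->
  (endpoint s).1 = - (size s)%:Z /\ 0 <= (endpoint s).2.
Proof.
elim/last_ind: s => [|s m IH] //.
rewrite all_rcons endpoint_rcons size_rcons => /andP[hm /IH].
by case: (endpoint s) => x y /=; case: m hm => //= _ [*]; split; lia.
Qed.

Definition path_length (N M : int) : nat :=
  if N < 0 then `|N|%N else if M < 0 then `|M|%N else (`|N| + `|M|)%N.

Lemma path_length_NE (N M : int) :
  0 <= N -> 0 <= M -> path_length N M = (`|N| + `|M|)%N.
Proof. by move=> hN hM; rewrite /path_length !le_gtF. Qed.

Lemma path_length_SES (N M : int) : 0 <= N -> M < 0 -> path_length N M = `|M|%N.
Proof. by move=> hN hM; rewrite /path_length le_gtF // hM. Qed.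

Lemma path_length_WNW (N M : int) : N < 0 -> path_length N M = `|N|%N.
Proof. by move=> hN; rewrite /path_length hN. Qed.

Lemma hybrid_path_size (N M : int) s :
  hybrid_path N M s -> size s = path_length N M.
Proof.
rewrite /path_length; have [hN|hN] := lerP 0 N; have [hM|hM] := lerP 0 M.
- by rewrite hybrid_path_NE // => /andP[/eqP E /endpoint_NE[]]; rewrite E /=; lia.
- by rewrite hybrid_path_SES // => /and3P[/eqP E /endpoint_SES[]]; rewrite E /=; lia.
- by rewrite hybrid_path_WNW // => /and3P[/eqP E /endpoint_WNW[]]; rewrite E /=; lia.
- by rewrite hybrid_path_neg.
Qed.

Lemma hybrid_path_rcons_NE (N M : int) (t : seq move) m :
  0 <= N -> 0 <= M -> NE_move m ->
  hybrid_path N M (rcons t m) = (endpoint t == move_source m (N, M)) && all NE_move t.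
Proof.
by move=> hN hM hm; rewrite hybrid_path_NE // all_rcons hm endpoint_rcons_eq.
Qed.

Lemma hybrid_path_rcons_SES (N M : int) (t : seq move) m :
  0 <= N -> M < 0 -> SES_move m -> (0 < size t)%N ->
  hybrid_path N M (rcons t m) =
  [&& endpoint t == move_source m (N, M), all SES_move t & head mN t == mS].
Proof.
move=> hN hM hm; case: t => [|x t] // _.
by rewrite hybrid_path_SES // all_rcons hm endpoint_rcons_eq.
Qed.

Lemma hybrid_path_rcons_WNW (N M : int) (t : seq move) m :
  N < 0 -> 0 <= M -> WNW_move m -> (0 < size t)%N ->
  hybrid_path N M (rcons t m) =
  [&& endpoint t == move_source m (N, M), all WNW_move t & head mN t == mW].
Proof.
move=> hN hM hm; case: t => [|x t] // _.
by rewrite hybrid_path_WNW // all_rcons hm endpoint_rcons_eq.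
Qed.

Section PathSums.
Variables (R : comUnitRingType) (w : int -> int -> R).
Local Notation P := (hybrid_sum w).
Local Notation last_move_terms N M L m :=
  (\sum_(t : L.-tuple move | hybrid_path N M (rcons t m)) path_weight w (rcons t m)).

Lemma Wst0 s : Wst w s 0 = 1.
Proof. by rewrite /Wst big_geq. Qed.

Lemma hybrid_sumE (N M : int) L :
  path_length N M = L ->
  P N M = \sum_(t : L.-tuple move | hybrid_path N M t) path_weight w t.
Proof.
move=> <-.
have lt_len : (path_length N M < (`|N| + `|M|).+1)%N.
  by rewrite /path_length; do 2?case: ifP => _; lia.
rewrite /hybrid_sum (bigD1 (Ordinal lt_len)) //= [X in _ + X]big1 ?addr0 // => i ne_i.
apply: big_pred0 => t; apply/negP => /hybrid_path_size; rewrite size_tuple => E.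
by move: ne_i; rewrite -val_eqE /= E eqxx.
Qed.

Lemma hybrid_sum_last_move (N M : int) L : path_length N M = L.+1 ->
  P N M = \sum_(m : move) last_move_terms N M L m.
Proof. by move=> hL; rewrite (hybrid_sumE hL) big_tuple_rcons. Qed.

Lemma last_move_sum (N M : int) m (N' M' : int) L : path_length N' M' = L ->
  (forall t : L.-tuple move, hybrid_path N M (rcons t m) = hybrid_path N' M' t) ->
  last_move_terms N M L m = P N' M' * (move_step w (N', M') m).2.
Proof.
move=> hL hprefix; rewrite (hybrid_sumE hL) mulr_suml.
apply: eq_big => // t; rewrite hprefix => /hybrid_path_endpoint E.
by rewrite path_weight_rcons E.
Qed.

Lemma hybrid_sum_len1 (N M : int) : path_length N M = 1%N ->
  P N M = \sum_(m : move) if hybrid_path N M [:: m] then path_weight w [:: m] else 0.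
Proof.
by move=> hL; rewrite (hybrid_sum_last_move hL); apply: eq_bigr => m _; rewrite big_tuple0.
Qed.

Lemma hybrid_sum_neg (N M : int) : N < 0 -> M < 0 -> P N M = 0.
Proof.
move=> hN hM; rewrite /hybrid_sum big1 // => i _.
by apply: big_pred0 => t; rewrite hybrid_path_neg.
Qed.

Lemma hybrid_sum_m1M M : 0 < M -> P (-1) M = 0.
Proof.
move=> hM; rewrite hybrid_sum_len1; last by rewrite /path_length.
apply: big1 => m _; rewrite hybrid_path_WNW ?ltW //.
by case: m; rewrite /endpoint /path_end /= ?xpair_eqE ?andbF //= eq_sym gt_eqF.
Qed.

Lemma hybrid_sumNm1 N : 0 < N -> P N (-1) = 0.
Proof.
move=> hN; rewrite hybrid_sum_len1; last by rewrite /path_length lt_gtF.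
apply: big1 => m _; rewrite hybrid_path_SES ?ltW //.
by case: m; rewrite /endpoint /path_end /= ?xpair_eqE ?andbF //= eq_sym gt_eqF.
Qed.

Lemma hybrid_sum_rec_NE (N M : int) : 0 <= N -> 0 <= M -> (N, M) != (0, 0) ->
  P N M = P N (M - 1) + P (N - 1) M * Wst w N M.
Proof.
move=> hN hM; rewrite xpair_eqE negb_and => nz.
have NM_gt0 : 0 < N + M by case/orP: nz => /eqP; lia.
set L := (`|N| + `|M|).-1.
have hL : path_length N M = L.+1 by rewrite path_length_NE //; lia.
have drop m : ~~ NE_move m -> last_move_terms N M L m = 0.
  move=> hm; apply: big_pred0 => t.
  by rewrite hybrid_path_NE // all_rcons (negbTE hm) andbF.
rewrite (hybrid_sum_last_move hL) big_move.
rewrite (drop mS) // (drop mES) // (drop mW) // (drop mNW) // !addr0.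
congr (_ + _).
  have [M0|M_gt0] : M = 0 \/ 0 < M by lia.
    rewrite M0 sub0r hybrid_sumNm1; last by lia.
    apply: big_pred0 => t; rewrite hybrid_path_rcons_NE //.
    by apply/negP => /andP[/eqP E /endpoint_NE[_ _]]; rewrite E /=; lia.
  rewrite (last_move_sum (N' := N) (M' := M - 1)) ?mulr1 //.
  - by rewrite path_length_NE //; lia.
  - by move=> t; rewrite hybrid_path_rcons_NE // hybrid_path_NE //; lia.
have [N0|N_gt0] : N = 0 \/ 0 < N by lia.
  rewrite N0 sub0r hybrid_sum_m1M; last by lia.
  rewrite mul0r; apply: big_pred0 => t; rewrite hybrid_path_rcons_NE //.
  by apply/negP => /andP[/eqP E /endpoint_NE[_]]; rewrite E /=; lia.
rewrite (last_move_sum (N' := N - 1) (M' := M)) /= ?subrK //.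
- by rewrite path_length_NE //; lia.
- by move=> t; rewrite hybrid_path_rcons_NE // hybrid_path_NE //; lia.
Qed.

Lemma hybrid_sum_rec_SES (N M : int) : 0 <= N -> M < 0 ->
  P N M = P N (M - 1) + P (N - 1) M * Wst w N M.
Proof.
move=> hN hM.
suff -> : P N (M - 1) = P N M - P (N - 1) M * Wst w N M by rewrite subrK.
have hM1 : M - 1 < 0 by lia.
set L := `|M|%N.
have hL : path_length N (M - 1) = L.+1 by rewrite path_length_SES //; lia.
have L_gt0 : (0 < L)%N by lia.
have drop m : ~~ SES_move m -> last_move_terms N (M - 1) L m = 0.
  move=> hm; apply: big_pred0 => t.
  by rewrite hybrid_path_SES // all_rcons (negbTE hm) andbF.
rewrite (hybrid_sum_last_move hL) big_move.
rewrite (drop mN) // (drop mE) // (drop mW) // (drop mNW) // !add0r !addr0.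
congr (_ + _).
  rewrite (last_move_sum (N' := N) (M' := M)) ?mulr1 //.
  - by rewrite path_length_SES.
  - by move=> t; rewrite hybrid_path_rcons_SES ?size_tuple //= subrK hybrid_path_SES.
have [N0|N_gt0] : N = 0 \/ 0 < N by lia.
  rewrite N0 sub0r hybrid_sum_neg // mul0r oppr0.
  apply: big_pred0 => t; rewrite hybrid_path_rcons_SES ?size_tuple //.
  by apply/negP => /and3P[/eqP E /endpoint_SES[_]]; rewrite E /=; lia.
rewrite (last_move_sum (N' := N - 1) (M' := M)) /= ?subrK ?mulrN //.
- by rewrite path_length_SES //; lia.
- move=> t; rewrite hybrid_path_rcons_SES ?size_tuple //= subrK.
  by rewrite hybrid_path_SES //; lia.
Qed.

Hypothesis w_unit : forall s t, w s t \is a GRing.unit.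

Lemma Wst_unit s t : Wst w s t \is a GRing.unit.
Proof.
by rewrite /Wst; case: ifP => _; apply: unitr_prod => i _; rewrite ?unitrV w_unit.
Qed.

Lemma hybrid_sum_rec_WNW (N M : int) : N < 0 -> 0 <= M ->
  P N M = P N (M - 1) + P (N - 1) M * Wst w N M.
Proof.
move=> hN hM.
suff -> : P (N - 1) M = (P N M - P N (M - 1)) / Wst w N M.
  by rewrite divrK ?Wst_unit // addrC subrK.
have hN1 : N - 1 < 0 by lia.
set L := `|N|%N.
have hL : path_length (N - 1) M = L.+1 by rewrite path_length_WNW //; lia.
have L_gt0 : (0 < L)%N by lia.
have drop m : ~~ WNW_move m -> last_move_terms (N - 1) M L m = 0.
  move=> hm; apply: big_pred0 => t.
  by rewrite hybrid_path_WNW // all_rcons (negbTE hm) andbF.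
rewrite (hybrid_sum_last_move hL) big_move.
rewrite (drop mN) // (drop mE) // (drop mS) // (drop mES) // !add0r mulrBl -mulNr.
congr (_ + _).
  rewrite (last_move_sum (N' := N) (M' := M)) /= ?subrK //.
  - by rewrite path_length_WNW.
  - by move=> t; rewrite hybrid_path_rcons_WNW ?size_tuple //= subrK hybrid_path_WNW.
have [M0|M_gt0] : M = 0 \/ 0 < M by lia.
  rewrite M0 sub0r hybrid_sum_neg // oppr0 !mul0r.
  apply: big_pred0 => t; rewrite hybrid_path_rcons_WNW ?size_tuple //.
  by apply/negP => /and3P[/eqP E /endpoint_WNW[_]]; rewrite E /=; lia.
rewrite (last_move_sum (N' := N) (M' := M - 1)) /= ?subrK ?mulrN ?mulNr //.
- by rewrite path_length_WNW.
- move=> t; rewrite hybrid_path_rcons_WNW ?size_tuple //= subrK.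
  by rewrite hybrid_path_WNW //; lia.
Qed.

Lemma hybrid_sum_rec (N M : int) : (N, M) != (0, 0) ->
  P N M = P N (M - 1) + P (N - 1) M * Wst w N M.
Proof.
move=> nz; have [hN|hN] := lerP 0 N; have [hM|hM] := lerP 0 M.
- exact: hybrid_sum_rec_NE.
- exact: hybrid_sum_rec_SES.
- exact: hybrid_sum_rec_WNW.
- by rewrite !hybrid_sum_neg ?mul0r ?addr0 //; lia.
Qed.

Lemma hybrid_sum00 : P 0 0 = 1.
Proof. by rewrite (hybrid_sumE (L := 0%N)) // big_tuple0. Qed.

Lemma hybrid_sum0M M : P 0 M = 1.
Proof.
move: M; apply: (int_two_sided_const (g := P 0)) => [||k hk|k hk].
- exact: hybrid_sum00.
- by rewrite hybrid_sum_len1 // big_move /= !add0r !addr0 /path_weight /= mulr1.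
- rewrite hybrid_sum_rec ?addrK ?sub0r ?hybrid_sum_m1M ?mul0r ?addr0 //; first lia.
  by rewrite xpair_eqE; lia.
- rewrite [RHS]hybrid_sum_rec ?sub0r ?[P (-1) k]hybrid_sum_neg ?mul0r ?addr0 //.
  by rewrite xpair_eqE; lia.
Qed.

Lemma hybrid_sumN0 N : P N 0 = 1.
Proof.
move: N; apply: (int_two_sided_const (g := fun N => P N 0)) => [||k hk|k hk].
- exact: hybrid_sum00.
- rewrite hybrid_sum_len1 // big_move /= !add0r !addr0.
  by rewrite /path_weight /= Wst0 invr1 mulr1.
- rewrite hybrid_sum_rec ?addrK ?sub0r ?hybrid_sumNm1 ?add0r ?Wst0 ?mulr1 //; first lia.
  by rewrite xpair_eqE; lia.
- rewrite [RHS]hybrid_sum_rec ?sub0r ?[P k (-1)]hybrid_sum_neg ?add0r ?Wst0 ?mulr1 //.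
  by rewrite xpair_eqE; lia.
Qed.

End PathSums.

Section BinomialRecurrence.
Variables (R : comUnitRingType) (u : int -> int -> R).
Hypothesis u_unit : forall k m, u k m \is a GRing.unit.

Definition binomial_rec (f : int -> int -> R) : Prop :=
  forall n k, (n + 1, k) != (0, 0) ->
    f (n + 1) k = f n k + f n (k - 1) * u k (n + 1 - k).

Lemma binomial_rec_eq0 d : binomial_rec d ->
  (forall n, d n 0 = 0) -> (forall n, d n n = 0) -> forall n k, d n k = 0.
Proof.
move=> d_rec d0 dn.
have col_pos (i : nat) n : d n i%:Z = 0.
  elim: i n => [|i IH] n; first exact: d0.
  rewrite -(dn i.+1); apply: (int_shift_const (f := d^~ i.+1)) => {}n.
  rewrite d_rec; last by rewrite xpair_eqE; lia.
  by rewrite (_ : _ - 1 = i%:Z) ?IH ?mul0r ?addr0 //; lia.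
have col_neg (i : nat) n : d n (- i%:Z) = 0.
  elim: i n => [|i IH] n; first by rewrite oppr0 d0.
  rewrite (_ : - _ = - i%:Z - 1); last by lia.
  have [[n1 i0]|nz] := eqVneq (n + 1, - i%:Z) (0, 0).
    by rewrite (_ : - i%:Z - 1 = n) ?dn //; lia.
  have /esym := d_rec _ _ nz; rewrite !IH add0r => dm_u.
  by rewrite -(mulrK (u_unit (- i%:Z) (n + 1 - - i%:Z)) (d n _)) dm_u mul0r.
by move=> n [i|i]; rewrite ?NegzE ?col_pos ?col_neg.
Qed.

Lemma binomial_rec_unique f g : binomial_rec f -> binomial_rec g ->
  (forall n, f n 0 = g n 0) -> (forall n, f n n = g n n) -> f =2 g.
Proof.
move=> f_rec g_rec fg0 fgn n k; apply/subr0_eq.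
apply: (binomial_rec_eq0 (d := fun n k => f n k - g n k)) => {n k} [n k nz|n|n].
- by rewrite f_rec // g_rec //; ring.
- by rewrite fg0 subrr.
- by rewrite fgn subrr.
Qed.

End BinomialRecurrence.

Theorem theorem4 (R : comUnitRingType) (w : int -> int -> R)
  (w_unit : forall s t, w s t \is a GRing.unit)
  (binw : int -> int -> R)
  (binw_n0 : forall n, binw n 0 = 1)
  (binw_nn : forall n, binw n n = 1)
  (binw_rec : forall n k, (n + 1, k) != (0, 0) ->
       binw (n + 1) k = binw n k + binw n (k - 1) * Wst w k (n + 1 - k)) :
  forall n k : int, hybrid_sum w k (n - k) = binw n k.
Proof.
apply: (binomial_rec_unique (Wst_unit w_unit)) => // [n k nz|n|n].
- rewrite (hybrid_sum_rec w_unit); last by move: nz; rewrite !xpair_eqE; lia.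
  by rewrite (_ : n + 1 - k - 1 = n - k) 1?(_ : n - (k - 1) = n + 1 - k) //; lia.
- by rewrite subr0 hybrid_sum0M.
- by rewrite subrr hybrid_sumN0.
Qed.
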